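(* A sequence $(a_n(q))_{n\ge1}$ in $\mathbb{Z}[q]$ is a $q$-Gauss sequence if and only if there exists a sequence $(g_n(q))_{n\ge1}$ in $\mathbb{Z}[q]$ such that $a_n(q)=\sum_{d\mid n}\left[\tfrac{n}{d}\right]_{q^d}g_{n/d}(q^d)$ for all $n\ge1$.
   Context: $\mu$ is the Möbius function; $[k]_{x}=1+x+\dots+x^{k-1}$, so $[k]_{q^d}=1+q^d+\dots+q^{d(k-1)}$ and $[n]_q=1+q+\dots+q^{n-1}$. A sequence $(a_n(q))$ in $\mathbb{Z}[q]$ is a $q$-Gauss sequence if $[n]_q$ divides $\sum_{d\mid n}\mu(d)a_{n/d}(q^d)$ in $\mathbb{Z}[q]$ for all $n\ge1$. *)

From mathcomp Require Import all_boot all_order all_algebra.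
Set Implicit Arguments. Unset Strict Implicit. Unset Printing Implicit Defensive.
Import GRing.Theory.
Local Open Scope ring_scope.

Definition moebius (n : nat) : int :=
  if [forall p : 'I_n.+1, prime p ==> ~~ (p * p %| n)%N]
  then (-1) ^+ size (primes n) else 0.

Definition qint (k : nat) (x : {poly int}) : {poly int} := \sum_(i < k) x ^+ i.

Definition subst_pow (p : {poly int}) (d : nat) : {poly int} := p \Po 'X^d.

(* divisibility in Z[q] (genuine, not pseudo-division) *)
Definition zdvd (p s : {poly int}) : Prop := exists r : {poly int}, s = r * p.

(* (a_n)_{n>=1} is a q-Gauss sequence; a 0 is irrelevant. *)
Definition qGauss (a : nat -> {poly int}) : Prop :=
  forall n : nat, (0 < n)%N ->
    zdvd (qint n 'X)
      (\sum_(d <- divisors n) (moebius d)%:~R *: subst_pow (a (n %/ d)%N) d).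

From mathcomp Require Import all_boot all_order all_algebra.
Set Implicit Arguments.
Unset Strict Implicit.
Unset Printing Implicit Defensive.

Import GRing.Theory.
Local Open Scope ring_scope.

(* Arithmetic functions act on sequences of polynomials by the twisted
   Dirichlet convolution (f * x)_n = sum_(d | n) f(d) x_(n/d)(q^d), and this
   action is compatible with the ordinary Dirichlet product.  Since
   [n/d]_(q^d) g_(n/d)(q^d) is b_(n/d)(q^d) for b_m = [m]_q g_m, the right-hand
   side of the theorem says a = 1 * b; by Moebius inversion this is
   equivalent to mu * a = b, i.e. to (mu * a)_n being the multiple
   [n]_q g_n of [n]_q, which is the q-Gauss congruence. *)

Lemma squarefreeP n : (0 < n)%N ->
  reflect (forall p, prime p -> ~~ (p * p %| n)%N)
          [forall p : 'I_n.+1, prime p ==> ~~ (p * p %| n)%N].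
Proof.
move=> n_gt0; apply: (iffP forallP) => [sqf p p_pr | sqf p].
- apply/negP => pp_n.
  have p_lt : (p < n.+1)%N.
    by rewrite ltnS (leq_trans _ (dvdn_leq n_gt0 pp_n)) // leq_pmulr ?prime_gt0.
  by move: (sqf (Ordinal p_lt)) => /implyP /(_ p_pr) /negP.
- by apply/implyP => /sqf.
Qed.

Lemma moebius1 : moebius 1 = 1.
Proof.
by rewrite /moebius; case: (@squarefreeP 1 isT) => // -[] p /prime_gt1;
  rewrite dvdn1 muln_eq1 => /gtn_eqF ->.
Qed.

Lemma moebius_sq_dvd p n : prime p -> (p * p %| n)%N -> (0 < n)%N ->
  moebius n = 0.
Proof.
move=> p_pr pp_n n_gt0; rewrite /moebius; case: (squarefreeP n_gt0) => // sqf.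
by move: (sqf p p_pr); rewrite pp_n.
Qed.

Lemma size_primes_pmul p n : prime p -> ~~ (p %| n)%N -> (0 < n)%N ->
  size (primes (p * n)) = (size (primes n)).+1.
Proof.
move=> p_pr p_n n_gt0; have p_gt0 := prime_gt0 p_pr.
rewrite -[RHS]/(size (p :: primes n)).
apply/perm_size/uniq_perm; first exact: primes_uniq.
  by rewrite /= primes_uniq mem_primes p_pr n_gt0 (negbTE p_n).
by move=> q; rewrite (primesM _ p_gt0 n_gt0) (primes_prime p_pr) !inE.
Qed.

Lemma moebius_pmul p n : prime p -> ~~ (p %| n)%N -> (0 < n)%N ->
  moebius (p * n) = - moebius n.
Proof.
move=> p_pr p_n n_gt0; have p_gt0 := prime_gt0 p_pr.
have pn_gt0 : (0 < p * n)%N by rewrite muln_gt0 p_gt0.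
rewrite /moebius.
case: (squarefreeP pn_gt0) => sqf_pn; case: (squarefreeP n_gt0) => sqf_n.
- by rewrite size_primes_pmul // exprS mulN1r.
- exfalso; apply: sqf_n => q q_pr.
  by apply: contra (sqf_pn q q_pr); apply: dvdn_mull.
- exfalso; apply: sqf_pn => q q_pr; apply/negP => qq_pn.
  have [q_eq_p | q_neq_p] := eqVneq q p.
    by move: qq_pn; rewrite q_eq_p dvdn_pmul2l // (negbTE p_n).
  have qq_p : coprime (q * q) p.
    by rewrite coprimeMl prime_coprime // dvdn_prime2 // q_neq_p.
  by move: qq_pn; rewrite Gauss_dvdr // (negbTE (sqf_n q q_pr)).
- by rewrite oppr0.
Qed.

Lemma divisors_gt0 d n : d \in divisors n -> (0 < d)%N.
Proof.
case: (posnP n) => [-> | n_gt0]; first by rewrite inE => /eqP ->.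
by rewrite -dvdn_divisors // => /dvdn_gt0->.
Qed.

Lemma divn_divisors_gt0 d n : (0 < n)%N -> d \in divisors n -> (0 < n %/ d)%N.
Proof.
move=> n_gt0 d_n; rewrite divn_gt0 ?(divisors_gt0 d_n) // dvdn_leq //.
by rewrite dvdn_divisors.
Qed.

Lemma perm_divisors_mull d m : (0 < d)%N -> (0 < m)%N ->
  perm_eq [seq d * e | e <- divisors m]%N [seq e <- divisors (d * m) | d %| e]%N.
Proof.
move=> d_gt0 m_gt0; have dm_gt0 : (0 < d * m)%N by rewrite muln_gt0 d_gt0.
apply: uniq_perm; last move=> e.
- rewrite map_inj_uniq ?divisors_uniq // => e1 e2 /eqP.
  by rewrite eqn_pmul2l // => /eqP.
- by rewrite filter_uniq ?divisors_uniq.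
rewrite mem_filter -dvdn_divisors //.
apply/mapP/andP => [[e' e'_m ->] | [/dvdnP[e' ->] e_dm]].
  by rewrite dvdn_mulr // dvdn_pmul2l // dvdn_divisors.
exists e'; last exact: mulnC.
by rewrite -dvdn_divisors // -(dvdn_pmul2l d_gt0) mulnC.
Qed.

Lemma perm_divisors_dvd m n : (0 < n)%N -> (m %| n)%N ->
  perm_eq [seq d <- divisors n | d %| m]%N (divisors m).
Proof.
move=> n_gt0 m_n; have m_gt0 := dvdn_gt0 n_gt0 m_n.
apply: uniq_perm; rewrite ?filter_uniq ?divisors_uniq // => d.
rewrite mem_filter -!dvdn_divisors //; apply/andP/idP => [[] // | d_m].
by split; last exact: dvdn_trans d_m m_n.
Qed.

Lemma perm_divisors_div n : (0 < n)%N ->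
  perm_eq [seq n %/ d | d <- divisors n]%N (divisors n).
Proof.
move=> n_gt0; have divK d : d \in divisors n -> (n %/ (n %/ d))%N = d.
  by rewrite -dvdn_divisors // => d_n; rewrite divnA // mulKn.
apply: uniq_perm; rewrite ?divisors_uniq //.
  rewrite map_inj_in_uniq ?divisors_uniq // => d1 d2.
  by move=> /divK {2}<- /divK {2}<- ->.
have div_mem d : d \in divisors n -> (n %/ d)%N \in divisors n.
  by rewrite -!dvdn_divisors // => /dvdn_div.
move=> d; apply/mapP/idP => [[e /div_mem e_n ->] // | d_n].
by exists (n %/ d)%N; rewrite ?div_mem ?divK.
Qed.

Lemma big_divisors_div (V : nmodType) n (F : nat -> V) : (0 < n)%N ->
  \sum_(d <- divisors n) F (n %/ d)%N = \sum_(d <- divisors n) F d.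
Proof.
move=> n_gt0; rewrite -(big_map (divn n) xpredT).
exact: perm_big (perm_divisors_div n_gt0).
Qed.

Lemma exchange_big_divisors (V : nmodType) n (F : nat -> nat -> V) : (0 < n)%N ->
  \sum_(d <- divisors n) \sum_(e <- divisors (n %/ d)) F d e =
  \sum_(m <- divisors n) \sum_(d <- divisors m) F d (m %/ d)%N.
Proof.
move=> n_gt0.
transitivity (\sum_(d <- divisors n)
                \sum_(m <- divisors n | (d %| m)%N) F d (m %/ d)%N).
  rewrite big_seq [RHS]big_seq; apply: eq_bigr => d d_n.
  have d_dvd_n : (d %| n)%N by rewrite dvdn_divisors.
  have := perm_divisors_mull (divisors_gt0 d_n) (divn_divisors_gt0 n_gt0 d_n).
  rewrite mulnC divnK // => perm_dn.
  rewrite -[RHS]big_filter -(perm_big _ perm_dn).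
  by rewrite big_map; apply: eq_bigr => e _; rewrite mulKn ?(divisors_gt0 d_n).
rewrite (exchange_big_dep xpredT) //= big_seq [RHS]big_seq.
apply: eq_bigr => m m_n; rewrite -big_filter.
by rewrite (perm_big _ (perm_divisors_dvd n_gt0 _)) // dvdn_divisors.
Qed.

Lemma sum_moebius_divisors n : (0 < n)%N ->
  \sum_(d <- divisors n) moebius d = (n == 1%N)%:R.
Proof.
move=> n_gt0; have [-> | n_neq1] := eqVneq n 1%N.
  by rewrite big_seq1 moebius1.
have p_pr : prime (pdiv n) by rewrite pdiv_prime // ltn_neqAle eq_sym n_neq1.
set p := pdiv n in p_pr *; have p_gt0 := prime_gt0 p_pr.
have [k def_n] : exists k, n = (p * k)%N.
  by exists (n %/ p)%N; rewrite mulnC divnK // pdiv_dvd.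
have k_gt0 : (0 < k)%N by move: n_gt0; rewrite def_n muln_gt0 => /andP[].
have pk_gt0 : (0 < p * k)%N by rewrite muln_gt0 p_gt0.
have perm_coprime : perm_eq [seq d <- divisors (p * k) | ~~ (p %| d)%N]
                            [seq d <- divisors k | ~~ (p %| d)%N].
  apply: uniq_perm; rewrite ?filter_uniq ?divisors_uniq // => d.
  rewrite !mem_filter -!dvdn_divisors //; case: (boolP (p %| d)%N) => //= p_d.
  by rewrite Gauss_dvdr // coprime_sym prime_coprime.
rewrite def_n (bigID (fun d => p %| d)%N) /=.
rewrite -[X in X + _]big_filter -[X in _ + X]big_filter.
rewrite -(perm_big _ (perm_divisors_mull p_gt0 k_gt0)) (perm_big _ perm_coprime).
rewrite big_map (bigID (fun d => p %| d)%N) /= big_seq_cond big1 ?add0r; last first.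
  move=> e /andP[e_k p_e]; apply: (moebius_sq_dvd p_pr).
    by rewrite dvdn_pmul2l.
  by rewrite muln_gt0 p_gt0 (divisors_gt0 e_k).
rewrite big_filter; apply/eqP; rewrite addr_eq0 -sumrN; apply/eqP.
rewrite big_seq_cond [RHS]big_seq_cond; apply: eq_bigr => e /andP[e_k p_e].
by rewrite moebius_pmul ?(divisors_gt0 e_k).
Qed.

Lemma subst_pow_comp p d e : subst_pow (subst_pow p e) d = subst_pow p (e * d).
Proof. by rewrite /subst_pow -comp_polyA comp_Xn_poly -exprM mulnC. Qed.

Lemma subst_pow1 p : subst_pow p 1 = p.
Proof. exact: comp_polyXr. Qed.

Lemma subst_pow_qint k d : subst_pow (qint k 'X) d = qint k 'X^d.
Proof.
by rewrite /subst_pow raddf_sum; apply: eq_bigr => i _; apply: comp_Xn_poly.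
Qed.

Definition dirichlet (f h : nat -> int) (n : nat) : int :=
  \sum_(d <- divisors n) f d * h (n %/ d)%N.

Definition dirichlet_act (f : nat -> int) (x : nat -> {poly int}) (n : nat) :=
  \sum_(d <- divisors n) (f d)%:~R *: subst_pow (x (n %/ d)%N) d.

Lemma eq_dirichlet_act f f' x x' n : (0 < n)%N ->
    (forall k, (0 < k)%N -> f k = f' k) -> (forall k, (0 < k)%N -> x k = x' k) ->
  dirichlet_act f x n = dirichlet_act f' x' n.
Proof.
move=> n_gt0 eq_f eq_x; rewrite /dirichlet_act big_seq [RHS]big_seq.
apply: eq_bigr => d d_n.
by rewrite eq_f ?eq_x ?(divisors_gt0 d_n) ?(divn_divisors_gt0 n_gt0 d_n).
Qed.

Lemma dirichlet_act_unit x n : (0 < n)%N ->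
  dirichlet_act (fun m => (m == 1%N)%:R) x n = x n.
Proof.
move=> n_gt0; rewrite /dirichlet_act (bigD1_seq 1%N) ?divisor1 ?divisors_uniq //=.
rewrite big1 => [|d /negbTE ->]; last by rewrite scale0r.
by rewrite addr0 divn1 subst_pow1 scale1r.
Qed.

Lemma dirichlet_actA f h x n : (0 < n)%N ->
  dirichlet_act f (dirichlet_act h x) n = dirichlet_act (dirichlet f h) x n.
Proof.
move=> n_gt0; rewrite /dirichlet_act.
pose F d e := (f d * h e)%:~R *: subst_pow (x (n %/ (d * e))%N) (d * e).
transitivity (\sum_(d <- divisors n) \sum_(e <- divisors (n %/ d)) F d e).
  apply: eq_bigr => d _; rewrite /subst_pow raddf_sum scaler_sumr /=.
  apply: eq_bigr => e _.
  rewrite comp_polyZ -!/(subst_pow _ _) subst_pow_comp scalerA.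
  by rewrite /F -divnMA [(e * d)%N]mulnC !intz.
rewrite exchange_big_divisors // big_seq [RHS]big_seq; apply: eq_bigr => m m_n.
rewrite /dirichlet intz scaler_suml big_seq [RHS]big_seq; apply: eq_bigr => d d_m.
have d_dvd_m : (d %| m)%N by rewrite dvdn_divisors ?(divisors_gt0 m_n).
by rewrite /F [(d * _)%N]mulnC divnK // intz.
Qed.

Lemma dirichlet_moebius1 n : (0 < n)%N ->
  dirichlet moebius (fun _ => 1) n = (n == 1%N)%:R.
Proof.
move=> n_gt0; rewrite -sum_moebius_divisors //.
by apply: eq_bigr => d _; rewrite mulr1.
Qed.

Lemma dirichlet1_moebius n : (0 < n)%N ->
  dirichlet (fun _ => 1) moebius n = (n == 1%N)%:R.
Proof.
move=> n_gt0; rewrite -sum_moebius_divisors // -(big_divisors_div moebius n_gt0).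
by apply: eq_bigr => d _; rewrite mul1r.
Qed.

Lemma moebius_inversion a b :
  (forall n, (0 < n)%N -> a n = dirichlet_act (fun _ => 1) b n) <->
  (forall n, (0 < n)%N -> b n = dirichlet_act moebius a n).
Proof.
split=> [a_def | b_def] n n_gt0.
- rewrite (eq_dirichlet_act n_gt0 (fun _ _ => erefl) a_def) dirichlet_actA //.
  rewrite (eq_dirichlet_act n_gt0 dirichlet_moebius1 (fun _ _ => erefl)).
  by rewrite dirichlet_act_unit.
- rewrite (eq_dirichlet_act n_gt0 (fun _ _ => erefl) b_def) dirichlet_actA //.
  rewrite (eq_dirichlet_act n_gt0 dirichlet1_moebius (fun _ _ => erefl)).
  by rewrite dirichlet_act_unit.
Qed.

Lemma qGaussP a : qGauss a <->
  exists g, forall n, (0 < n)%N -> dirichlet_act moebius a n = g n * qint n 'X.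
Proof.
split=> [a_qG | [g a_g] n n_gt0]; last by exists (g n); apply: a_g.
have witness n :
    exists r, (0 < n)%N ==> (dirichlet_act moebius a n == r * qint n 'X).
  have [-> | /a_qG[r a_r]] := posnP n; first by exists 0.
  by exists r; apply/implyP => _; apply/eqP.
exists (fun n => xchoose (witness n)) => n n_gt0.
by apply/eqP; move/implyP: (xchooseP (witness n)); apply.
Qed.

Lemma sum_qint_subst_pow g n :
  \sum_(d <- divisors n) qint (n %/ d)%N 'X^d * subst_pow (g (n %/ d)%N) d =
  dirichlet_act (fun _ => 1) (fun k => g k * qint k 'X) n.
Proof.
apply: eq_bigr => d _.
by rewrite intz scale1r mulrC -subst_pow_qint; apply/esym/comp_polyM.
Qed.

Theorem mainTheorem13 (a : nat -> {poly int}) :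
  qGauss a <->
  exists g : nat -> {poly int},
    forall n : nat, (0 < n)%N ->
      a n = \sum_(d <- divisors n)
              qint (n %/ d)%N ('X^d) * subst_pow (g (n %/ d)%N) d.
Proof.
apply: iff_trans (qGaussP a) _; split=> -[g g_def]; exists g => n n_gt0.
- rewrite sum_qint_subst_pow; move: n n_gt0; apply/moebius_inversion => n n_gt0.
  by rewrite g_def.
- have a_def k : (0 < k)%N ->
      a k = dirichlet_act (fun _ => 1) (fun k => g k * qint k 'X) k.
    by move=> k_gt0; rewrite g_def // sum_qint_subst_pow.
  by move/moebius_inversion: a_def => /(_ n n_gt0) <-.
Qed.
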